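(* Let $h\in D$ be a fixed energy level and let $z_0\in\Gamma_0\cap M_h$, where $M_h=\{H_0=h\}$. Then: (i) the angle mismatch $\theta^s(z_0)-\theta^u(z_0)$ is a constant depending only on $h$ (denote it $\theta^s(h)-\theta^u(h)$); (ii) the scattering map $\sigma_0$ associated to $\Gamma_0$ is given, in the action-angle coordinates $(I,\theta)$ on $\Lambda_0$, by $\sigma_0(I,\theta)=(I,\theta+\Delta(I))$, where $\Delta(I)=\theta^s(h)-\theta^u(h)$ for $I=I_h$.
   Context: $(M,\Omega)$ is a real-analytic symplectic manifold; $H_0$ real-analytic with Hamiltonian flow $\Phi^t_0$. There is a saddle-center equilibrium $L$ and a family of Lyapunov periodic orbits $\lambda_0(h)\subset\{H_0=h\}$; $\Lambda_0=\bigcup_{h\in D}\lambda_0(h)$ ($D$ a closed interval) is a 2-dimensional normally hyperbolic invariant manifold with boundary, parametrized by symplectic action-angle coordinates $(I,\theta)$, with $\lambda_0(h)=\{I=I_h\}$ and the flow on each $\lambda_0(h)$ a rigid rotation in $\theta$. For $z$ in the unstable (resp. stable) manifold $W^u(\Lambda_0)$ (resp. $W^s(\Lambda_0)$), $z^-=\Omega^-(z)$ (resp. $z^+=\Omega^+(z)$) is the point of $\Lambda_0$ whose unstable (resp. stable) fiber contains $z$; these projections are equivariant: $\Omega^\pm(\Phi^t_0 z)=\Phi^t_0(\Omega^\pm z)$. $W^u(\Lambda_0)$ and $W^s(\Lambda_0)$ intersect transversally along a homoclinic channel $\Gamma_0$: a submanifold with $T_z\Gamma_0=T_zW^u\cap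 T_zW^s$, $T_zM=T_z\Gamma_0\oplus T_zW^u(z^-)\oplus T_zW^s(z^+)$, on which $\Omega^\pm$ are diffeomorphisms onto open sets $U^\pm\subset\Lambda_0$; the scattering map is $\sigma_0=\Omega^+\circ(\Omega^-|_{\Gamma_0})^{-1}:U^-\to U^+$, and for each $h$, $\Gamma_0\cap M_h$ consists of points $\Phi^t_0(z_0)$, $t$ in an interval containing $0$. Coordinates: $(I^u,\theta^u,y^u,x^u)$ are symplectic coordinates on a neighborhood of $W^u(\Lambda_0)$ and $(I^s,\theta^s,y^s,x^s)$ on a neighborhood of $W^s(\Lambda_0)$, both coinciding with the normal form coordinates $(I,\theta,y,x)$ near $\Lambda_0$ (where $\Lambda_0=\{x=y=0\}$ and $(I,\theta)$ restrict to the action-angle coordinates), with $I^u(z)=I^u(z^-)$, $\theta^u(z)=\theta^u(z^-)$ for $z\in W^u(\Lambda_0)$ and $I^s(z)=I^s(z^+)$, $\theta^s(z)=\theta^s(z^+)$ for $z\in W^s(\Lambda_0)$. *)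

From HB Require Import structures.
From mathcomp Require Import all_boot all_order all_algebra.
From mathcomp Require Import all_classical all_reals all_analysis.
Set Implicit Arguments. Unset Strict Implicit. Unset Printing Implicit Defensive.
Import Order.TTheory GRing.Theory Num.Theory.
Import numFieldNormedType.Exports.
Local Open Scope classical_set_scope.
Local Open Scope ring_scope.

(* Angles are represented by real numbers; equality of angles is equality
   modulo 2*pi (i.e. equality in R / 2 pi Z). *)
Definition angle_eq {R : realType} (a b : R) : Prop :=
  exists k : int, a - b = k%:~R * (2 * pi).

Definition unstable_fiber {R : realType} {M : pseudoMetricType R}
  (Phi : R -> M -> M) (x : M) : set M :=
  [set z | forall e : R, 0 < e ->
     exists T : R, forall t : R, t <= T -> ball (Phi t x) e (Phi t z)].

Definition stable_fiber {R : realType} {M : pseudoMetricType R}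
  (Phi : R -> M -> M) (x : M) : set M :=
  [set z | forall e : R, 0 < e ->
     exists T : R, forall t : R, T <= t -> ball (Phi t x) e (Phi t z)].

Definition unstable_manifold {R : realType} {M : pseudoMetricType R}
  (Phi : R -> M -> M) (Lam : set M) : set M :=
  \bigcup_(x in Lam) unstable_fiber Phi x.

Definition stable_manifold {R : realType} {M : pseudoMetricType R}
  (Phi : R -> M -> M) (Lam : set M) : set M :=
  \bigcup_(x in Lam) stable_fiber Phi x.

(* Graph of the scattering map sigma0 = Omega^+ o (Omega^- restricted to Gamma0)^{-1}
   : U^- -> U^+, where U^- = Omega^-(Gamma0). *)
Definition scattering_graph {R : realType} {M : pseudoMetricType R}
  (Gamma0 : set M) (Om Op : M -> M) (x y : M) : Prop :=
  exists z, Gamma0 z /\ Om z = x /\ Op z = y.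

Definition energy_level {R : realType} {M : Type} (H0 : M -> R) (h : R) : set M :=
  [set z | H0 z = h].

(* Along a stable or unstable fibre the orbits of z and of its base point are
   asymptotic; the base point's orbit stays in the compact set Lambda0, so a
   cluster point of it is also a cluster point of the orbit of z, and the
   continuous flow-invariant H0 takes the same value on both orbits.  Hence for
   z in Gamma0 /\ M_h both base points lie on lambda0(h), which gives the
   action part of (ii).  By equivariance of Omega^-/+, the mismatch
   theta^s z - theta^u z = theta(Omega^+ z) - theta(Omega^- z) is unchanged
   along the flow, both base points rotating with the same frequency omega(h);
   as Gamma0 /\ M_h is a single orbit, it depends only on h. *)

From HB Require Import structures.
From mathcomp Require Import all_boot all_order all_algebra.
From mathcomp Require Import all_classical all_reals all_analysis.
From mathcomp Require Import ring.
Set Implicit Arguments.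
Unset Strict Implicit.
Unset Printing Implicit Defensive.

Import Order.TTheory GRing.Theory Num.Theory.
Import numFieldNormedType.Exports.
Local Open Scope classical_set_scope.
Local Open Scope ring_scope.

Lemma continuous_cluster {X Y : topologicalType} (f : X -> Y) (F : set_system X)
    (p : X) :
  {for p, continuous f} -> cluster F p -> cluster (f @ F) (f p).
Proof.
move=> fc clFp A B FA /fc Bp.
by have [x [Ax Bx]] := clFp _ _ FA Bp; exists (f x).
Qed.

Lemma cluster_cst {T : Type} {Y : topologicalType} (G : set_system T)
    {FG : Filter G} (c p : Y) :
  hausdorff_space Y -> cluster (cst c @ G) p -> p = c.
Proof. by move=> hY /(cvg_cluster (cvg_cst c)) /hY. Qed.

Definition asymptotic {R : numFieldType} {M : pseudoMetricType R} {T : Type}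
    (G : set_system T) (u v : T -> M) :=
  forall e : R, 0 < e -> \forall t \near G, ball (u t) e (v t).

Lemma cluster_asymptotic {R : numFieldType} {M : pseudoMetricType R} {T : Type}
    (G : set_system T) {FG : Filter G} (u v : T -> M) (p : M) :
  asymptotic G u v -> cluster (u @ G) p -> cluster (v @ G) p.
Proof.
move=> uv clp A B vA /nbhs_ballP[r r0 pB].
have r20 : 0 < r / 2 by rewrite divr_gt0.
pose E := [set t | A (v t) /\ ball (u t) (r / 2) (v t)].
have GE : G E by apply: filterI; [exact: vA | exact: uv].
have uGE : (u @ G) (u @` E) by apply: (@filterS _ G) GE => t Et; exists t.
have [_ [[t [vAt uvt] <-] put]] := clp _ _ uGE (nbhsx_ballx p _ r20).
by exists (v t); split=> //; apply: pB; rewrite (splitr r); exact: ball_triangle put uvt.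
Qed.

Lemma cluster_cst_comp {T : Type} {X Y : topologicalType} (G : set_system T)
    {FG : Filter G} (f : X -> Y) (u : T -> X) (c : Y) (p : X) :
  hausdorff_space Y -> {for p, continuous f} ->
  (forall t, f (u t) = c) -> cluster (u @ G) p -> f p = c.
Proof.
move=> hY fc fuc /(continuous_cluster fc).
change (cluster ((f \o u) @ G) (f p) -> f p = c); rewrite (funext fuc : f \o u = cst c).
exact: cluster_cst.
Qed.

Lemma asymptotic_cst_eq {R : numFieldType} {M : pseudoMetricType R}
    {Y : topologicalType} {T : Type} (G : set_system T) {PG : ProperFilter G}
    (f : M -> Y) (K : set M) (u v : T -> M) (cu cv : Y) :
  hausdorff_space Y -> continuous f -> compact K ->
  (forall t, K (u t)) -> (forall t, f (u t) = cu) -> (forall t, f (v t) = cv) ->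
  asymptotic G u v -> cu = cv.
Proof.
move=> hY fc Kc Ku fu fv uv.
have uGK : (u @ G) K by apply: (@filterE _ G) => t; exact: Ku.
have [p [_ clu]] := Kc _ (fmap_proper_filter u PG) uGK.
have clv : cluster (v @ G) p by apply: cluster_asymptotic uv clu.
by rewrite -(cluster_cst_comp hY (fc p) fu clu) (cluster_cst_comp hY (fc p) fv clv).
Qed.

Lemma unstable_fiber_asymptotic {R : realType} {M : pseudoMetricType R}
    (Phi : R -> M -> M) (x z : M) :
  unstable_fiber Phi x z -> asymptotic -oo%R (Phi^~ x) (Phi^~ z).
Proof.
move=> xz e /xz[T xzT]; exists T; split; first exact: num_real.
by move=> t /ltW /xzT.
Qed.

Lemma stable_fiber_asymptotic {R : realType} {M : pseudoMetricType R}
    (Phi : R -> M -> M) (x z : M) :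
  stable_fiber Phi x z -> asymptotic +oo%R (Phi^~ x) (Phi^~ z).
Proof.
move=> xz e /xz[T xzT]; exists T; split; first exact: num_real.
by move=> t /ltW /xzT.
Qed.

Section FibersOfCompactInvariantSet.
Context {R : realType} {M : pseudoMetricType R}.
Variables (H : M -> R) (Phi : R -> M -> M) (K : set M).
Hypotheses (H_cont : continuous H) (H_inv : forall t z, H (Phi t z) = H z).
Hypotheses (K_compact : compact K) (K_inv : forall t x, K x -> K (Phi t x)).

Lemma unstable_fiber_level x z : K x -> unstable_fiber Phi x z -> H z = H x.
Proof.
move=> Kx /unstable_fiber_asymptotic xz; symmetry.
by apply: (asymptotic_cst_eq (K := K)) xz => // t; exact: K_inv.
Qed.

Lemma stable_fiber_level x z : K x -> stable_fiber Phi x z -> H z = H x.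
Proof.
move=> Kx /stable_fiber_asymptotic xz; symmetry.
by apply: (asymptotic_cst_eq (K := K)) xz => // t; exact: K_inv.
Qed.

Lemma unstable_projection_level (Om : M -> M) :
  (forall z, unstable_manifold Phi K z -> K (Om z) /\ unstable_fiber Phi (Om z) z) ->
  forall z, unstable_manifold Phi K z -> K (Om z) /\ H (Om z) = H z.
Proof.
move=> Om_spec z /Om_spec[KOz zfib].
by split=> //; rewrite (unstable_fiber_level KOz zfib).
Qed.

Lemma stable_projection_level (Op : M -> M) :
  (forall z, stable_manifold Phi K z -> K (Op z) /\ stable_fiber Phi (Op z) z) ->
  forall z, stable_manifold Phi K z -> K (Op z) /\ H (Op z) = H z.
Proof.
move=> Op_spec z /Op_spec[KOz zfib].
by split=> //; rewrite (stable_fiber_level KOz zfib).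
Qed.

End FibersOfCompactInvariantSet.

Lemma bigcup_flow_invariant {I T S : Type} (D : set I) (lam : I -> set T)
    (Phi : S -> T -> T) :
  (forall i t x, D i -> lam i x -> lam i (Phi t x)) ->
  forall t x, (\bigcup_(i in D) lam i) x -> (\bigcup_(i in D) lam i) (Phi t x).
Proof. by move=> lam_inv t x [i Di lx]; exists i => //; exact: lam_inv. Qed.

Lemma bigcup_level_mem {R : realType} {T : Type} (D : set R) (lam : R -> set T)
    (H : T -> R) :
  (forall h, D h -> lam h `<=` energy_level H h) ->
  forall x, (\bigcup_(h in D) lam h) x -> lam (H x) x.
Proof. by move=> lam_level x [h Dh lx]; rewrite (lam_level h Dh x lx). Qed.

Lemma angle_eqB {R : realType} (a b c d : R) :
  angle_eq a b -> angle_eq c d -> angle_eq (a - c) (b - d).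
Proof. by move=> [k ek] [l el]; exists (k - l); rewrite intrB mulrBl -ek -el; ring. Qed.

Lemma angle_eqBlDl {R : realType} (a b c : R) :
  angle_eq (a - b) c -> angle_eq a (b + c).
Proof. by move=> [k e]; exists k; rewrite -e; ring. Qed.

Lemma angle_eq_shiftB {R : realType} (a a' b b' s : R) :
  angle_eq a' (a + s) -> angle_eq b' (b + s) -> angle_eq (a' - b') (a - b).
Proof. by move=> /angle_eqB aa /aa; rewrite [b + _]addrC addrKA. Qed.

Lemma orbit_invariant_angle_factor {R : realType} {T : Type}
    (Phi : R -> T -> T) (H : T -> R) (S : set T) (D : set R) (m : T -> R) :
  (forall z, S z -> D (H z) -> S `&` energy_level H (H z) `<=` range (Phi^~ z)) ->
  (forall z t, S z -> S (Phi t z) -> D (H z) -> angle_eq (m (Phi t z)) (m z)) ->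
  exists d : R -> R, forall z, S z -> D (H z) -> angle_eq (m z) (d (H z)).
Proof.
move=> level_orbit m_inv.
exists (fun h => xget 0 [set m z | z in S `&` energy_level H h]) => z Sz Dz.
have [y [Sy /= Hy] <-] : [set m z | z in S `&` energy_level H (H z)]
    (xget 0 [set m z | z in S `&` energy_level H (H z)]).
  by apply: xgetPex; exists (m z), z.
rewrite -Hy in Dz *.
have [t _ yz] : range (Phi^~ y) z by apply: level_orbit => //; split; rewrite ?Hy.
by rewrite -yz in Sz *; exact: m_inv.
Qed.

Theorem proposition4p5
  (R : realType) (M : pseudoMetricType R)
  (* Hamiltonian and its flow *)
  (H0 : M -> R) (Phi : R -> M -> M)
  (H0_cont : continuous H0)
  (Phi0 : forall z, Phi 0 z = z)
  (PhiD : forall s t z, Phi (s + t) z = Phi s (Phi t z))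
  (H0_inv : forall t z, H0 (Phi t z) = H0 z)
  (* D = [a, b], family of Lyapunov orbits lambda0 h, Lambda0 = their union *)
  (a b : R) (lam0 : R -> set M) (Lam0 : set M)
  (Lam0_def : Lam0 = \bigcup_(h in `[a, b]) lam0 h)
  (Lam0_compact : compact Lam0)
  (lam0_level : forall h, h \in `[a, b] -> lam0 h `<=` energy_level H0 h)
  (* action-angle coordinates (I, theta) on Lambda0 *)
  (I theta : M -> R) (Ih : R -> R)
  (lam0_I : forall h, h \in `[a, b] -> lam0 h = Lam0 `&` [set x | I x = Ih h])
  (chart_inj : forall x y, Lam0 x -> Lam0 y -> I x = I y ->
                 angle_eq (theta x) (theta y) -> x = y)
  (* the flow on each lambda0 h is a rigid rotation in theta *)
  (omega : R -> R)
  (lam0_inv : forall h t x, h \in `[a, b] -> lam0 h x -> lam0 h (Phi t x))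
  (rot : forall h t x, h \in `[a, b] -> lam0 h x ->
           angle_eq (theta (Phi t x)) (theta x + omega h * t))
  (* projections Omega^- and Omega^+ along unstable / stable fibers *)
  (Om Op : M -> M)
  (Om_spec : forall z, unstable_manifold Phi Lam0 z ->
               Lam0 (Om z) /\ unstable_fiber Phi (Om z) z)
  (Op_spec : forall z, stable_manifold Phi Lam0 z ->
               Lam0 (Op z) /\ stable_fiber Phi (Op z) z)
  (Om_equiv : forall t z, unstable_manifold Phi Lam0 z -> Om (Phi t z) = Phi t (Om z))
  (Op_equiv : forall t z, stable_manifold Phi Lam0 z -> Op (Phi t z) = Phi t (Op z))
  (* angle coordinates theta^u, theta^s *)
  (theta_u theta_s : M -> R)
  (theta_u_Lam : forall x, Lam0 x -> theta_u x = theta x)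
  (theta_s_Lam : forall x, Lam0 x -> theta_s x = theta x)
  (theta_u_fib : forall z, unstable_manifold Phi Lam0 z -> theta_u z = theta_u (Om z))
  (theta_s_fib : forall z, stable_manifold Phi Lam0 z -> theta_s z = theta_s (Op z))
  (* homoclinic channel Gamma0 *)
  (Gamma0 : set M)
  (Gamma0_sub : Gamma0 `<=` unstable_manifold Phi Lam0 `&` stable_manifold Phi Lam0)
  (Om_inj : {in Gamma0 &, injective Om})
  (Op_inj : {in Gamma0 &, injective Op})
  (Gamma0_orbit : forall h z0, h \in `[a, b] -> Gamma0 z0 -> H0 z0 = h ->
     exists J : set R, is_interval J /\ J 0 /\
       Gamma0 `&` energy_level H0 h = [set Phi t z0 | t in J]) :
  exists dtheta : R -> R,
    (* (i) the angle mismatch depends only on the energy level *)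
    (forall h z0, h \in `[a, b] -> Gamma0 z0 -> H0 z0 = h ->
       angle_eq (theta_s z0 - theta_u z0) (dtheta h)) /\
    (* (ii) sigma0 (I, theta) = (I, theta + Delta(I)), Delta(I_h) = dtheta h *)
    (forall h x y, h \in `[a, b] -> scattering_graph Gamma0 Om Op x y ->
       I x = Ih h ->
       I y = I x /\ angle_eq (theta y) (theta x + dtheta h)).
Proof.
have Lam0_inv : forall t x, Lam0 x -> Lam0 (Phi t x).
  by rewrite Lam0_def; exact: bigcup_flow_invariant.
have Lam0_lam0 : forall x, Lam0 x -> lam0 (H0 x) x.
  by rewrite Lam0_def; exact: bigcup_level_mem.
have base_level : forall z, Gamma0 z ->
    (Lam0 (Om z) /\ H0 (Om z) = H0 z) /\ (Lam0 (Op z) /\ H0 (Op z) = H0 z).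
  move=> z /Gamma0_sub[um sm]; split.
  - exact: (unstable_projection_level H0_cont H0_inv Lam0_compact Lam0_inv Om_spec).
  - exact: (stable_projection_level H0_cont H0_inv Lam0_compact Lam0_inv Op_spec).
have mismatchE : forall z, Gamma0 z ->
    theta_s z - theta_u z = theta (Op z) - theta (Om z).
  move=> z Gz; have [um sm] := Gamma0_sub _ Gz; have [[Lu _] [Ls _]] := base_level _ Gz.
  by rewrite theta_s_fib // theta_u_fib // theta_s_Lam // theta_u_Lam.
have [dtheta mismatch_dtheta] : exists dtheta : R -> R, forall z, Gamma0 z ->
    H0 z \in `[a, b] -> angle_eq (theta_s z - theta_u z) (dtheta (H0 z)).
  apply: (orbit_invariant_angle_factor (Phi := Phi) (D := [set h | h \in `[a, b]])).
    move=> z Gz hab; have [J [_ [_ ->]]] := Gamma0_orbit _ _ hab Gz erefl.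
    by move=> _ [t _ <-]; exists t.
  move=> z t Gz Gtz hab; have [um sm] := Gamma0_sub _ Gz.
  have [[Lu Hu] [Ls Hs]] := base_level _ Gz.
  rewrite !mismatchE // Op_equiv // Om_equiv //.
  apply: angle_eq_shiftB; apply: rot hab _; [rewrite -Hs | rewrite -Hu];
    exact: Lam0_lam0.
exists dtheta; split=> [h z hab Gz Hz | h x y hab [z [Gz [<- <-]]] Iz].
  by rewrite -Hz in hab *; exact: mismatch_dtheta.
have [[Lu Hu] [Ls Hs]] := base_level _ Gz.
have Hz : H0 z = h.
  by rewrite -Hu; apply: (lam0_level _ hab); rewrite lam0_I //; split.
have : lam0 h (Op z) by rewrite -Hz -Hs; exact: Lam0_lam0.
rewrite lam0_I // => -[_ /= ->]; split=> //.
by apply: angle_eqBlDl; rewrite -mismatchE // -Hz; apply: mismatch_dtheta; rewrite ?Hz.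
Qed.
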